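(* For every $K>0$ there exist a uniformly continuous function $\hat g_K:\mathbb{R}\to\mathbb{R}$ and a number $x_K\ge K$ such that: (i) $\hat g_K$ is affine on $[x_K,\infty)$ and on $(-\infty,-x_K]$; (ii) $\hat g_K=\hat g$ on $[-K,K]$; (iii) $\hat g_K\ge\hat g$; (iv) $\hat g_K-\bar\Gamma$ is concave for every $C^2$ function $\bar\Gamma$ satisfying $\partial^2_{xx}\bar\Gamma=\bar\gamma$. Moreover, the family $(\hat g_K)_{K>0}$ is uniformly bounded (in absolute value) by a function with linear growth and converges to $\hat g$ uniformly on compact sets as $K\to\infty$.
   Context: Standing assumptions: $f\in C^2_b(\mathbb{R})$ with $\inf f>0$; $\bar\gamma:\mathbb{R}\to\mathbb{R}$ is bounded and continuous with $\iota\le\bar\gamma\le1/f-\iota$ for some $\iota>0$; $g:\mathbb{R}\to\mathbb{R}$ is lower semicontinuous with $g^-$ bounded and $g^+$ of linear growth; $\hat g:=(g-\bar\Gamma)^{\rm conc}+\bar\Gamma$ where $\bar\Gamma$ is any $C^2$ function with $\partial^2_{xx}\bar\Gamma=\bar\gamma$ and ${}^{\rm conc}$ denotes the concave envelope (independent of the choice of $\bar\Gamma$); $\hat g$ is assumed uniformly continuous. *)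

From Stdlib Require Import Reals Lra.
From Coquelicot Require Import Coquelicot.
Open Scope R_scope.

Definition concave (u : R -> R) : Prop :=
  forall x y t, 0 <= t <= 1 ->
    t * u x + (1 - t) * u y <= u (t * x + (1 - t) * y).

(* concave envelope: pointwise infimum of all concave majorants
   (the smallest concave function dominating h, when it exists) *)
Definition conc (h : R -> R) (x : R) : R :=
  real (Glb_Rbar (fun r => exists u, concave u /\ (forall y, h y <= u y) /\ r = u x)).

Definition C2_with_second_deriv (G gam : R -> R) : Prop :=
  exists dG : R -> R, forall x, is_derive G x (dG x) /\ is_derive dG x (gam x).

Definition C2b (f : R -> R) : Prop :=
  exists f1 f2 : R -> R,
    (forall x, is_derive f x (f1 x) /\ is_derive f1 x (f2 x) /\ continuous f2 x) /\
    exists B, forall x, Rabs (f x) <= B /\ Rabs (f1 x) <= B /\ Rabs (f2 x) <= B.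

Definition bounded_fun (h : R -> R) : Prop := exists B, forall x, Rabs (h x) <= B.

Definition lower_semicontinuous (h : R -> R) : Prop :=
  forall x eps, 0 < eps -> exists delta, 0 < delta /\
    forall y, Rabs (y - x) < delta -> h x - eps < h y.

Definition unif_continuous (h : R -> R) : Prop :=
  forall eps, 0 < eps -> exists delta, 0 < delta /\
    forall x y, Rabs (x - y) < delta -> Rabs (h x - h y) < eps.

Definition ghat (g Gam : R -> R) (x : R) : R :=
  conc (fun y => g y - Gam y) x + Gam x.

From Stdlib Require Import Reals Lra.
From Coquelicot Require Import Coquelicot.
Open Scope R_scope.

(* With [U := (g - Gam0)^conc], take [ghat_K := V_K + Gam0] where [V_K] is the minimum of
   three concave majorants of [U]: [U] with its graph outside [[-K, K]] replaced by its tangent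
   lines at [K] and [-K], and two caps [cap_height + C x - Gam0] and [cap_height - C x - Gam0],
   each with [Gam0] replaced on one half-line by its tangent at [0].  So [V_K] is concave,
   dominates [U] and equals it on [[-K, K]].  Since [Gam0'' >= iota > 0], [Gam0] eventually
   dominates every affine function, so far out the cap on which [ghat_K = cap_height +/- C x]
   is the smallest of the three; the caps also give the uniform linear bound.  Any other
   [Gam] with [Gam'' = gbar] differs from [Gam0] by an affine function. *)

Lemma exists_mean_value (F F1 : R -> R) :
  (forall z, is_derive F z (F1 z)) ->
  forall x y, exists c, Rmin x y <= c <= Rmax x y /\ F y - F x = F1 c * (y - x).
Proof.
  intros HF x y. apply MVT_gen; intros z _; [apply HF|].
  apply continuity_pt_filterlim, (ex_derive_continuous (K := R_AbsRing) (V := R_NormedModule)).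
  exists (F1 z); apply HF.
Qed.

Lemma is_derive_Rminus (F G : R -> R) (x a b : R) :
  is_derive F x a -> is_derive G x b -> is_derive (fun y => F y - G y) x (a - b).
Proof. exact (is_derive_minus F G x a b). Qed.

Lemma nondecreasing_of_deriv_nonneg (F F1 : R -> R) :
  (forall z, is_derive F z (F1 z)) -> (forall z, 0 <= F1 z) ->
  forall x y, x <= y -> F x <= F y.
Proof.
  intros HF HF1 x y Hxy.
  destruct (exists_mean_value F F1 HF x y) as [c [_ E]].
  specialize (HF1 c). nra.
Qed.

Lemma tangent_le_of_deriv2_nonneg (F F1 F2 : R -> R) :
  (forall z, is_derive F z (F1 z)) -> (forall z, is_derive F1 z (F2 z)) ->
  (forall z, 0 <= F2 z) -> forall x y, F x + F1 x * (y - x) <= F y.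
Proof.
  intros HF HF1 HF2 x y.
  pose proof (nondecreasing_of_deriv_nonneg F1 F2 HF1 HF2) as Hmono.
  destruct (exists_mean_value F F1 HF x y) as [c [Hc E]].
  destruct (Rle_dec x y).
  - rewrite Rmin_left, Rmax_right in Hc by lra.
    pose proof (Hmono x c ltac:(lra)). nra.
  - rewrite Rmin_right, Rmax_left in Hc by lra.
    pose proof (Hmono c x ltac:(lra)). nra.
Qed.

Lemma quadratic_minorant_of_deriv2_ge (F F1 F2 : R -> R) (c : R) :
  (forall z, is_derive F z (F1 z)) -> (forall z, is_derive F1 z (F2 z)) ->
  (forall z, c <= F2 z) -> forall x, F 0 + F1 0 * x + c / 2 * (x * x) <= F x.
Proof.
  intros HF HF1 HF2 x.
  assert (Hq : forall z, is_derive (fun y => c / 2 * (y * y)) z (c * z)).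
  { intro z. auto_derive; [exact I | field]. }
  assert (Hq1 : forall z, is_derive (fun y => c * y) z c).
  { intro z. auto_derive; [exact I | ring]. }
  pose proof (tangent_le_of_deriv2_nonneg (fun y => F y - c / 2 * (y * y))
    (fun y => F1 y - c * y) (fun y => F2 y - c)
    (fun z => is_derive_Rminus _ _ z _ _ (HF z) (Hq z))
    (fun z => is_derive_Rminus _ _ z _ _ (HF1 z) (Hq1 z))
    (fun z => ltac:(specialize (HF2 z); lra)) 0 x).
  lra.
Qed.

Lemma C2_with_second_deriv_sub_affine (G1 G2 gam : R -> R) :
  C2_with_second_deriv G1 gam -> C2_with_second_deriv G2 gam ->
  exists a b, forall x, G1 x - G2 x = a + b * x.
Proof.
  intros [d1 H1] [d2 H2]. exists (G1 0 - G2 0), (d1 0 - d2 0). intro x.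
  assert (T : forall F1 F2 e1 e2 : R -> R,
      (forall z, is_derive F1 z (e1 z) /\ is_derive e1 z (gam z)) ->
      (forall z, is_derive F2 z (e2 z) /\ is_derive e2 z (gam z)) ->
      F1 0 - F2 0 + (e1 0 - e2 0) * (x - 0) <= F1 x - F2 x).
  { intros F1 F2 e1 e2 HF1 HF2.
    apply (tangent_le_of_deriv2_nonneg (fun y => F1 y - F2 y) (fun y => e1 y - e2 y)
      (fun y => gam y - gam y)).
    - intro z. apply is_derive_Rminus; [apply HF1 | apply HF2].
    - intro z. apply is_derive_Rminus; [apply HF1 | apply HF2].
    - intro z. lra. }
  pose proof (T G1 G2 d1 d2 H1 H2). pose proof (T G2 G1 d2 d1 H2 H1). lra.
Qed.

Definition lipschitz_on (D : R -> Prop) (F : R -> R) : Prop :=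
  exists L, forall x y, D x -> D y -> Rabs (F x - F y) <= L * Rabs (x - y).

Definition unif_continuous_on (D : R -> Prop) (F : R -> R) : Prop :=
  forall eps, 0 < eps -> exists delta, 0 < delta /\
    forall x y, D x -> D y -> Rabs (x - y) < delta -> Rabs (F x - F y) < eps.

Lemma lipschitz_on_ext (D : R -> Prop) (F G : R -> R) :
  (forall x, D x -> F x = G x) -> lipschitz_on D G -> lipschitz_on D F.
Proof.
  intros E [L HL]. exists L. intros x y Hx Hy. rewrite (E x Hx), (E y Hy). auto.
Qed.

Lemma lipschitz_on_affine (D : R -> Prop) (F : R -> R) (b : R) :
  (forall x y, F x - F y = b * (x - y)) -> lipschitz_on D F.
Proof.
  intro E. exists (Rabs b). intros x y _ _. rewrite E, Rabs_mult. lra.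
Qed.

Lemma lipschitz_on_plus (D : R -> Prop) (F G : R -> R) :
  lipschitz_on D F -> lipschitz_on D G -> lipschitz_on D (fun x => F x + G x).
Proof.
  intros [L1 H1] [L2 H2]. exists (L1 + L2). intros x y Hx Hy.
  specialize (H1 x y Hx Hy). specialize (H2 x y Hx Hy).
  replace (F x + G x - (F y + G y)) with ((F x - F y) + (G x - G y)) by ring.
  pose proof (Rabs_triang (F x - F y) (G x - G y)). lra.
Qed.

Lemma lipschitz_on_minus (D : R -> Prop) (F G : R -> R) :
  lipschitz_on D F -> lipschitz_on D G -> lipschitz_on D (fun x => F x - G x).
Proof.
  intros HF [L HG]. apply (lipschitz_on_plus D F (fun x => - G x) HF).
  exists L. intros x y Hx Hy.
  replace (- G x - - G y) with (- (G x - G y)) by ring. rewrite Rabs_Ropp. auto.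
Qed.

Lemma lipschitz_on_min (D : R -> Prop) (F G : R -> R) :
  lipschitz_on D F -> lipschitz_on D G -> lipschitz_on D (fun x => Rmin (F x) (G x)).
Proof.
  intros [L1 H1] [L2 H2]. exists (L1 + L2). intros x y Hx Hy.
  specialize (H1 x y Hx Hy). specialize (H2 x y Hx Hy).
  assert (Rabs (Rmin (F x) (G x) - Rmin (F y) (G y)) <= Rabs (F x - F y) + Rabs (G x - G y))
    by (unfold Rmin; repeat destruct Rle_dec; split_Rabs; lra).
  lra.
Qed.

Lemma lipschitz_on_of_deriv_nondecreasing (F F1 : R -> R) (a b : R) :
  (forall z, is_derive F z (F1 z)) -> (forall x y, x <= y -> F1 x <= F1 y) ->
  lipschitz_on (fun x => a <= x <= b) F.
Proof.
  intros HF Hmono. exists (Rabs (F1 a) + Rabs (F1 b)). intros x y Hx Hy.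
  destruct (exists_mean_value F F1 HF y x) as [c [Hc E]].
  assert (Ha : a <= c) by (pose proof (Rmin_glb y x a); lra).
  assert (Hb : c <= b) by (pose proof (Rmax_lub y x b); lra).
  pose proof (Hmono a c Ha). pose proof (Hmono c b Hb).
  rewrite E, Rabs_mult.
  assert (Rabs (F1 c) <= Rabs (F1 a) + Rabs (F1 b)) by (split_Rabs; lra).
  apply Rmult_le_compat_r; [apply Rabs_pos | lra].
Qed.

Lemma unif_continuous_on_of_lipschitz_on (D : R -> Prop) (F : R -> R) :
  lipschitz_on D F -> unif_continuous_on D F.
Proof.
  intros [L HL] eps Heps. exists (eps / (Rabs L + 1)). split.
  { apply Rdiv_lt_0_compat; [lra | pose proof (Rabs_pos L); lra]. }
  intros x y Hx Hy Hxy. specialize (HL x y Hx Hy).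
  pose proof (Rabs_pos L). pose proof (Rabs_pos (x - y)). pose proof (Rle_abs L).
  assert (E : (Rabs L + 1) * (eps / (Rabs L + 1)) = eps) by (field; lra).
  assert ((Rabs L + 1) * Rabs (x - y) < eps).
  { rewrite <- E. apply Rmult_lt_compat_l; lra. }
  nra.
Qed.

Lemma unif_continuous_on_subset (D D' : R -> Prop) (F : R -> R) :
  (forall x, D' x -> D x) -> unif_continuous_on D F -> unif_continuous_on D' F.
Proof.
  intros HD HF eps Heps. destruct (HF eps Heps) as [d [Hd H]].
  exists d. split; auto.
Qed.

Lemma unif_continuous_on_ext (D : R -> Prop) (F G : R -> R) :
  (forall x, D x -> F x = G x) -> unif_continuous_on D G -> unif_continuous_on D F.
Proof.
  intros E HG eps Heps. destruct (HG eps Heps) as [d [Hd H]].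
  exists d. split; auto. intros x y Hx Hy. rewrite (E x Hx), (E y Hy). auto.
Qed.

Lemma unif_continuous_of_on_True (F : R -> R) :
  unif_continuous_on (fun _ => True) F -> unif_continuous F.
Proof.
  intros HF eps Heps. destruct (HF eps Heps) as [d [Hd H]].
  exists d. split; auto.
Qed.

Lemma unif_continuous_on_glue (D : R -> Prop) (F : R -> R) (a : R) : D a ->
  unif_continuous_on (fun x => D x /\ x <= a) F ->
  unif_continuous_on (fun x => D x /\ a <= x) F -> unif_continuous_on D F.
Proof.
  intros Ha Hl Hr eps Heps.
  destruct (Hl (eps / 2)) as [d1 [Hd1 H1]]; [lra|].
  destruct (Hr (eps / 2)) as [d2 [Hd2 H2]]; [lra|].
  exists (Rmin d1 d2). split; [apply Rmin_pos; auto|].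
  intros x y Hx Hy Hxy.
  pose proof (Rmin_l d1 d2). pose proof (Rmin_r d1 d2).
  assert (Tri : Rabs (F x - F y) <= Rabs (F x - F a) + Rabs (F a - F y)).
  { replace (F x - F y) with ((F x - F a) + (F a - F y)) by ring. apply Rabs_triang. }
  assert (Haa : D a /\ a <= a) by (split; [exact Ha | lra]).
  destruct (Rle_dec x a) as [Hxa|Hxa]; destruct (Rle_dec y a) as [Hya|Hya].
  - pose proof (H1 x y (conj Hx Hxa) (conj Hy Hya) ltac:(lra)). lra.
  - assert (Hy' : a <= y) by lra.
    pose proof (H1 x a (conj Hx Hxa) Haa ltac:(split_Rabs; lra)).
    pose proof (H2 a y Haa (conj Hy Hy') ltac:(split_Rabs; lra)).
    lra.
  - assert (Hx' : a <= x) by lra.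
    pose proof (H2 x a (conj Hx Hx') Haa ltac:(split_Rabs; lra)).
    pose proof (H1 a y Haa (conj Hy Hya) ltac:(split_Rabs; lra)).
    lra.
  - assert (Hx' : a <= x) by lra. assert (Hy' : a <= y) by lra.
    pose proof (H2 x y (conj Hx Hx') (conj Hy Hy') ltac:(lra)). lra.
Qed.

Lemma concave_ext (F G : R -> R) : (forall x, F x = G x) -> concave G -> concave F.
Proof. intros E HG x y t Ht. rewrite !E. auto. Qed.

Lemma concave_plus_affine (F : R -> R) (a b : R) :
  concave F -> concave (fun x => F x + (a + b * x)).
Proof. intros HF x y t Ht. pose proof (HF x y t Ht). lra. Qed.

Lemma concave_min (F G : R -> R) :
  concave F -> concave G -> concave (fun x => Rmin (F x) (G x)).
Proof.
  intros HF HG x y t Ht. pose proof (HF x y t Ht). pose proof (HG x y t Ht).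
  pose proof (Rmin_l (F x) (G x)). pose proof (Rmin_r (F x) (G x)).
  pose proof (Rmin_l (F y) (G y)). pose proof (Rmin_r (F y) (G y)).
  apply Rmin_glb; nra.
Qed.

Lemma concave_of_affine_majorants (F m : R -> R) :
  (forall z x, F x <= F z + m z * (x - z)) -> concave F.
Proof.
  intros H x y t Ht. set (z := t * x + (1 - t) * y).
  pose proof (H z x). pose proof (H z y).
  assert (E : t * (x - z) + (1 - t) * (y - z) = 0) by (unfold z; ring).
  assert (t * F x <= t * (F z + m z * (x - z))) by (apply Rmult_le_compat_l; lra).
  assert ((1 - t) * F y <= (1 - t) * (F z + m z * (y - z))) by (apply Rmult_le_compat_l; lra).
  assert (t * (F z + m z * (x - z)) + (1 - t) * (F z + m z * (y - z))
          = F z + m z * (t * (x - z) + (1 - t) * (y - z))) by ring.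
  rewrite E in *. lra.
Qed.

Lemma concave_chord (U : R -> R) : concave U -> forall y z x, y < z < x ->
  (x - z) * U y + (z - y) * U x <= (x - y) * U z.
Proof.
  intros HU y z x Hyzx. set (t := (x - z) / (x - y)).
  assert (Ht : 0 <= t <= 1).
  { unfold t; split; [apply Rdiv_le_0_compat; lra|].
    apply (Rdiv_le_1 (x - z) (x - y)); lra. }
  pose proof (HU y x t Ht) as H.
  replace (t * y + (1 - t) * x) with z in H by (unfold t; field; lra).
  replace ((x - z) * U y + (z - y) * U x) with ((x - y) * (t * U y + (1 - t) * U x))
    by (unfold t; field; lra).
  apply Rmult_le_compat_l; lra.
Qed.

Lemma Lub_Rbar_real_spec (E : R -> Prop) (q0 b : R) : E q0 -> (forall q, E q -> q <= b) ->
  (forall q, E q -> q <= real (Lub_Rbar E)) /\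
  (forall c, (forall q, E q -> q <= c) -> real (Lub_Rbar E) <= c).
Proof.
  intros Eq0 Hb. destruct (Lub_Rbar_correct E) as [Hub Hlub].
  assert (H1 : Rbar_le (Lub_Rbar E) b) by (apply Hlub; intros q Hq; apply Hb, Hq).
  assert (H2 : Rbar_le q0 (Lub_Rbar E)) by (apply Hub, Eq0).
  destruct (Lub_Rbar E) as [l| |]; simpl in *; try contradiction.
  split; [intros q Hq; exact (Hub q Hq)|].
  intros c Hc. exact (Hlub c Hc).
Qed.

Lemma Glb_Rbar_real_spec (E : R -> Prop) (a r0 : R) : E r0 -> (forall r, E r -> a <= r) ->
  (forall r, E r -> real (Glb_Rbar E) <= r) /\
  (forall c, (forall r, E r -> c <= r) -> c <= real (Glb_Rbar E)).
Proof.
  intros Er0 Ha. destruct (Glb_Rbar_correct E) as [Hlb Hglb].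
  assert (H1 : Rbar_le a (Glb_Rbar E)) by (apply Hglb; intros r Hr; apply Ha, Hr).
  assert (H2 : Rbar_le (Glb_Rbar E) r0) by (apply Hlb, Er0).
  destruct (Glb_Rbar E) as [l| |]; simpl in *; try contradiction.
  split; [intros r Hr; exact (Hlb r Hr)|].
  intros c Hc. exact (Hglb c Hc).
Qed.

(* For concave [U] this is the right derivative at [z], a supergradient. *)
Definition right_slope (U : R -> R) (z : R) : R :=
  real (Lub_Rbar (fun q => exists x, z < x /\ q = (U x - U z) / (x - z))).

Lemma concave_le_right_slope (U : R -> R) : concave U ->
  forall z x, U x <= U z + right_slope U z * (x - z).
Proof.
  intros HU z.
  destruct (Lub_Rbar_real_spec (fun q => exists x, z < x /\ q = (U x - U z) / (x - z))
    ((U (z + 1) - U z) / (z + 1 - z)) (U z - U (z - 1))) as [Hub Hlub].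
  - exists (z + 1). split; [lra | reflexivity].
  - intros q [x [Hx ->]]. pose proof (concave_chord U HU (z - 1) z x ltac:(lra)).
    apply Rle_div_l; lra.
  - fold (right_slope U z) in Hub, Hlub. set (m := right_slope U z) in *.
    intro x. destruct (Rtotal_order x z) as [Hx|[->|Hx]].
    + assert (Hm : m <= (U z - U x) / (z - x)).
      { apply Hlub. intros q [w [Hw ->]]. pose proof (concave_chord U HU x z w ltac:(lra)).
        apply Rle_div_l; [lra|].
        replace ((U z - U x) / (z - x) * (w - z)) with ((U z - U x) * (w - z) / (z - x))
          by (field; lra).
        apply Rle_div_r; lra. }
      apply Rle_div_r in Hm; [nra | lra].
    + lra.
    + assert (Hm : (U x - U z) / (x - z) <= m) by (apply Hub; exists x; split; [lra | reflexivity]).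
      apply Rle_div_l in Hm; lra.
Qed.

Lemma supergradient_nonincreasing (U s : R -> R) :
  (forall z x, U x <= U z + s z * (x - z)) -> forall z1 z2, z1 <= z2 -> s z2 <= s z1.
Proof.
  intros Hs z1 z2 Hz. destruct (Rle_lt_or_eq_dec _ _ Hz) as [Hlt | <-]; [|lra].
  pose proof (Hs z1 z2). pose proof (Hs z2 z1). nra.
Qed.

Section ConcaveEnvelope.

Variables (h u0 : R -> R).
Hypothesis concave_u0 : concave u0.
Hypothesis le_u0 : forall y, h y <= u0 y.

Lemma conc_le (u : R -> R) : concave u -> (forall y, h y <= u y) ->
  forall x, conc h x <= u x.
Proof.
  intros Hu Hhu x. unfold conc.
  apply (Glb_Rbar_real_spec _ (h x) (u0 x)); [exists u0; auto | |exists u; auto].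
  intros r [v [_ [Hv ->]]]. apply Hv.
Qed.

Lemma conc_ge_of_le_majorants (x c : R) :
  (forall u, concave u -> (forall y, h y <= u y) -> c <= u x) -> c <= conc h x.
Proof.
  intro Hc. unfold conc.
  apply (Glb_Rbar_real_spec _ (h x) (u0 x)); [exists u0; auto | |].
  - intros r [v [_ [Hv ->]]]. apply Hv.
  - intros r [u [Hu [Hhu ->]]]. auto.
Qed.

Lemma le_conc x : h x <= conc h x.
Proof. apply conc_ge_of_le_majorants. auto. Qed.

Lemma concave_conc : concave (conc h).
Proof.
  intros x y t Ht. apply conc_ge_of_le_majorants. intros u Hu Hhu.
  pose proof (conc_le u Hu Hhu x). pose proof (conc_le u Hu Hhu y).
  pose proof (Hu x y t Ht). nra.
Qed.

End ConcaveEnvelope.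

Section TangentClamp.

Variables (U s : R -> R).
Hypothesis le_tangent : forall z x, U x <= U z + s z * (x - z).

Definition tangent_clamp (K x : R) : R :=
  if Rlt_dec K x then U K + s K * (x - K)
  else if Rlt_dec x (- K) then U (- K) + s (- K) * (x + K) else U x.

Lemma tangent_clamp_mid K x : - K <= x <= K -> tangent_clamp K x = U x.
Proof.
  intro Hx. unfold tangent_clamp.
  destruct (Rlt_dec K x); [lra|]. destruct (Rlt_dec x (- K)); [lra | reflexivity].
Qed.

Lemma tangent_clamp_right K x : 0 <= K -> K <= x -> tangent_clamp K x = U K + s K * (x - K).
Proof.
  intros HK Hx. unfold tangent_clamp. destruct (Rlt_dec K x); [reflexivity|].
  replace x with K by lra. destruct (Rlt_dec K (- K)); [lra | ring].
Qed.

Lemma tangent_clamp_left K x : 0 <= K -> x <= - K ->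
  tangent_clamp K x = U (- K) + s (- K) * (x + K).
Proof.
  intros HK Hx. unfold tangent_clamp. destruct (Rlt_dec K x); [lra|].
  destruct (Rlt_dec x (- K)); [reflexivity|]. replace x with (- K) by lra. ring.
Qed.

Lemma le_tangent_clamp K x : U x <= tangent_clamp K x.
Proof.
  unfold tangent_clamp. destruct (Rlt_dec K x); [apply le_tangent|].
  destruct (Rlt_dec x (- K)); [|lra].
  pose proof (le_tangent (- K) x). lra.
Qed.

Lemma concave_tangent_clamp K : 0 <= K -> concave (tangent_clamp K).
Proof.
  intro HK. pose proof (supergradient_nonincreasing U s le_tangent) as Hmono.
  apply (concave_of_affine_majorants _
    (fun z => if Rlt_dec K z then s K else if Rlt_dec z (- K) then s (- K) else s z)).
  intros z x. unfold tangent_clamp. pose proof (Hmono (- K) K ltac:(lra)).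
  destruct (Rlt_dec K z); destruct (Rlt_dec K x).
  - lra.
  - destruct (Rlt_dec x (- K)).
    + pose proof (le_tangent K (- K)). nra.
    + pose proof (le_tangent K x). nra.
  - destruct (Rlt_dec z (- K)).
    + pose proof (le_tangent (- K) K).
      assert ((s K - s (- K)) * (x - K) <= 0) by (apply Rmult_le_0_r; lra). nra.
    + pose proof (le_tangent z K). pose proof (Hmono z K ltac:(lra)). nra.
  - destruct (Rlt_dec z (- K)); destruct (Rlt_dec x (- K)).
    + lra.
    + pose proof (le_tangent (- K) x). nra.
    + pose proof (le_tangent z (- K)). pose proof (Hmono (- K) z ltac:(lra)). nra.
    + apply le_tangent.
Qed.

End TangentClamp.

Definition dominance_radius (a b c : R) : R := (Rabs a + Rabs b) / c + 1.

Lemma affine_le_quadratic_far (a b c x : R) : 0 < c ->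
  dominance_radius a b c <= Rabs x -> a + b * x <= c * (x * x).
Proof.
  unfold dominance_radius. intros Hc Hx.
  assert (Hr : Rabs a + Rabs b <= c * (Rabs x - 1)).
  { assert (E : c * ((Rabs a + Rabs b) / c) = Rabs a + Rabs b) by (field; lra).
    assert (c * ((Rabs a + Rabs b) / c) <= c * (Rabs x - 1)) by (apply Rmult_le_compat_l; lra).
    lra. }
  pose proof (Rabs_pos a). pose proof (Rabs_pos b).
  assert (H1 : 1 <= Rabs x)
    by (pose proof (Rdiv_le_0_compat (Rabs a + Rabs b) c ltac:(lra) Hc); lra).
  assert (Hxx : Rabs x * Rabs x = x * x) by (rewrite <- Rabs_mult; apply Rabs_pos_eq; nra).
  assert (a + b * x <= Rabs a + Rabs b * Rabs x)
    by (pose proof (Rle_abs a); rewrite <- Rabs_mult; pose proof (Rle_abs (b * x)); lra).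
  nra.
Qed.

Lemma affine_le_quadratic (b c x : R) : 0 < c -> b * x <= c * (x * x) + b * b / (4 * c).
Proof.
  intro Hc.
  assert (E : c * (x * x) + b * b / (4 * c) - b * x = c * ((x - b / (2 * c)) * (x - b / (2 * c))))
    by (field; lra).
  assert (0 <= c * ((x - b / (2 * c)) * (x - b / (2 * c))))
    by (apply Rmult_le_pos; [lra | apply Rle_0_sqr]).
  lra.
Qed.

Section Truncation.

Variables (g Gam dGam gam : R -> R) (iota C : R).
Hypothesis iota_pos : 0 < iota.
Hypothesis Gam_deriv : forall x, is_derive Gam x (dGam x).
Hypothesis dGam_deriv : forall x, is_derive dGam x (gam x).
Hypothesis gam_ge : forall x, iota <= gam x.
Hypothesis g_le : forall x, g x <= C * (1 + Rabs x).

Lemma dGam_nondecreasing x y : x <= y -> dGam x <= dGam y.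
Proof.
  apply (nondecreasing_of_deriv_nonneg dGam gam dGam_deriv).
  intro z. specialize (gam_ge z). lra.
Qed.

Lemma Gam_tangent_le x y : Gam x + dGam x * (y - x) <= Gam y.
Proof.
  apply (tangent_le_of_deriv2_nonneg Gam dGam gam Gam_deriv dGam_deriv).
  intro z. specialize (gam_ge z). lra.
Qed.

Lemma Gam_quadratic_minorant x : Gam 0 + dGam 0 * x + iota / 2 * (x * x) <= Gam x.
Proof. exact (quadratic_minorant_of_deriv2_ge Gam dGam gam iota Gam_deriv dGam_deriv gam_ge x). Qed.

Lemma Gam_dominates_affine a b x : dominance_radius a b (iota / 2) <= Rabs x ->
  Gam 0 + dGam 0 * x + (a + b * x) <= Gam x.
Proof.
  intro Hx. pose proof (affine_le_quadratic_far a b (iota / 2) x ltac:(lra) Hx).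
  pose proof (Gam_quadratic_minorant x). lra.
Qed.

Definition cap_height : R := C + 2 * C * C / iota.

(* [Gam] cut off by its tangent at [0] on the negative half-line is convex, so [cap_pos]
   is concave; and [cap_pos + Gam] is affine on the positive half-line. *)
Definition cap_pos (x : R) : R :=
  cap_height + C * x - (if Rle_dec 0 x then Gam x else Gam 0 + dGam 0 * x).

Definition cap_neg (x : R) : R :=
  cap_height - C * x - (if Rle_dec x 0 then Gam x else Gam 0 + dGam 0 * x).

Lemma cap_pos_nonneg x : 0 <= x -> cap_pos x = cap_height + C * x - Gam x.
Proof. intro Hx. unfold cap_pos. destruct (Rle_dec 0 x); [reflexivity | lra]. Qed.

Lemma cap_pos_nonpos x : x <= 0 -> cap_pos x = cap_height + C * x - (Gam 0 + dGam 0 * x).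
Proof.
  intro Hx. unfold cap_pos. destruct (Rle_dec 0 x); [|reflexivity].
  replace x with 0 by lra. ring.
Qed.

Lemma cap_neg_nonpos x : x <= 0 -> cap_neg x = cap_height - C * x - Gam x.
Proof. intro Hx. unfold cap_neg. destruct (Rle_dec x 0); [reflexivity | lra]. Qed.

Lemma cap_neg_nonneg x : 0 <= x -> cap_neg x = cap_height - C * x - (Gam 0 + dGam 0 * x).
Proof.
  intro Hx. unfold cap_neg. destruct (Rle_dec x 0); [|reflexivity].
  replace x with 0 by lra. ring.
Qed.

Lemma concave_cap_pos : concave cap_pos.
Proof.
  apply (concave_of_affine_majorants cap_pos
    (fun z => C - (if Rle_dec 0 z then dGam z else dGam 0))).
  intros z x. unfold cap_pos. destruct (Rle_dec 0 z); destruct (Rle_dec 0 x).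
  - pose proof (Gam_tangent_le z x). lra.
  - pose proof (Gam_tangent_le z 0). pose proof (dGam_nondecreasing 0 z r). nra.
  - pose proof (Gam_tangent_le 0 x). lra.
  - lra.
Qed.

Lemma concave_cap_neg : concave cap_neg.
Proof.
  apply (concave_of_affine_majorants cap_neg
    (fun z => - C - (if Rle_dec z 0 then dGam z else dGam 0))).
  intros z x. unfold cap_neg. destruct (Rle_dec z 0); destruct (Rle_dec x 0).
  - pose proof (Gam_tangent_le z x). lra.
  - pose proof (Gam_tangent_le z 0). pose proof (dGam_nondecreasing z 0 r). nra.
  - pose proof (Gam_tangent_le 0 x). lra.
  - lra.
Qed.

Lemma cap_height_ge : C <= cap_height.
Proof.
  unfold cap_height. assert (0 <= 2 * C * C / iota) by (apply Rdiv_le_0_compat; nra). lra.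
Qed.

(* On the far half-line the linear growth of [g] is absorbed by the quadratic growth of
   [Gam]; [cap_height - C] is the constant [b^2 / (4 c)] for [b = 2 C], [c = iota / 2]. *)
Lemma sub_le_cap_pos y : g y - Gam y <= cap_pos y.
Proof.
  pose proof (g_le y). pose proof (Gam_quadratic_minorant y). pose proof cap_height_ge.
  destruct (Rle_dec 0 y).
  - rewrite cap_pos_nonneg by lra. rewrite Rabs_pos_eq in * by lra. lra.
  - rewrite cap_pos_nonpos by lra. rewrite Rabs_left in * by lra.
    pose proof (affine_le_quadratic (- (2 * C)) (iota / 2) y ltac:(lra)).
    replace (- (2 * C) * - (2 * C) / (4 * (iota / 2))) with (cap_height - C) in *
      by (unfold cap_height; field; lra).
    lra.
Qed.

Lemma sub_le_cap_neg y : g y - Gam y <= cap_neg y.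
Proof.
  pose proof (g_le y). pose proof (Gam_quadratic_minorant y). pose proof cap_height_ge.
  destruct (Rle_dec y 0).
  - rewrite cap_neg_nonpos by lra. rewrite Rabs_left1 in * by lra. lra.
  - rewrite cap_neg_nonneg by lra. rewrite Rabs_pos_eq in * by lra.
    pose proof (affine_le_quadratic (2 * C) (iota / 2) y ltac:(lra)).
    replace (2 * C * (2 * C) / (4 * (iota / 2))) with (cap_height - C) in *
      by (unfold cap_height; field; lra).
    lra.
Qed.

Definition conc_sub : R -> R := conc (fun y => g y - Gam y).

Lemma sub_le_conc_sub x : g x - Gam x <= conc_sub x.
Proof. exact (le_conc _ cap_pos concave_cap_pos sub_le_cap_pos x). Qed.

Lemma conc_sub_le_cap_pos x : conc_sub x <= cap_pos x.
Proof. exact (conc_le _ _ concave_cap_pos sub_le_cap_pos _ concave_cap_pos sub_le_cap_pos x). Qed.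

Lemma conc_sub_le_cap_neg x : conc_sub x <= cap_neg x.
Proof. exact (conc_le _ _ concave_cap_pos sub_le_cap_pos _ concave_cap_neg sub_le_cap_neg x). Qed.

Lemma conc_sub_le_tangent z x : conc_sub x <= conc_sub z + right_slope conc_sub z * (x - z).
Proof.
  exact (concave_le_right_slope conc_sub (concave_conc _ _ concave_cap_pos sub_le_cap_pos) z x).
Qed.

Definition conc_trunc (K x : R) : R :=
  Rmin (tangent_clamp conc_sub (right_slope conc_sub) K x) (Rmin (cap_pos x) (cap_neg x)).

Definition ghat_trunc (K x : R) : R := conc_trunc K x + Gam x.

(* Beyond this radius the quadratic growth of [Gam] makes [cap_pos] (resp. [cap_neg])
   the smallest of the three functions in [conc_trunc]. *)
Definition trunc_radius (K : R) : R :=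
  Rmax K (Rmax (dominance_radius 0 (2 * C) (iota / 2))
   (Rmax (dominance_radius (cap_height - Gam 0 - conc_sub K + right_slope conc_sub K * K)
            (C - dGam 0 - right_slope conc_sub K) (iota / 2))
         (dominance_radius (cap_height - Gam 0 - conc_sub (- K) - right_slope conc_sub (- K) * K)
            (- C - dGam 0 - right_slope conc_sub (- K)) (iota / 2)))).

Lemma trunc_radius_ge K :
  K <= trunc_radius K /\
  dominance_radius 0 (2 * C) (iota / 2) <= trunc_radius K /\
  dominance_radius (cap_height - Gam 0 - conc_sub K + right_slope conc_sub K * K)
    (C - dGam 0 - right_slope conc_sub K) (iota / 2) <= trunc_radius K /\
  dominance_radius (cap_height - Gam 0 - conc_sub (- K) - right_slope conc_sub (- K) * K)
    (- C - dGam 0 - right_slope conc_sub (- K)) (iota / 2) <= trunc_radius K.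
Proof.
  unfold trunc_radius.
  set (r0 := dominance_radius 0 (2 * C) (iota / 2)).
  set (rR := dominance_radius _ _ (iota / 2)).
  set (rL := dominance_radius _ (- C - _ - _) (iota / 2)).
  pose proof (Rmax_l K (Rmax r0 (Rmax rR rL))). pose proof (Rmax_r K (Rmax r0 (Rmax rR rL))).
  pose proof (Rmax_l r0 (Rmax rR rL)). pose proof (Rmax_r r0 (Rmax rR rL)).
  pose proof (Rmax_l rR rL). pose proof (Rmax_r rR rL).
  lra.
Qed.

Lemma concave_conc_trunc K : 0 <= K -> concave (conc_trunc K).
Proof.
  intro HK.
  apply concave_min; [|apply concave_min; [apply concave_cap_pos | apply concave_cap_neg]].
  exact (concave_tangent_clamp conc_sub _ conc_sub_le_tangent K HK).
Qed.

Lemma conc_sub_le_conc_trunc K x : conc_sub x <= conc_trunc K x.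
Proof.
  apply Rmin_glb; [apply (le_tangent_clamp conc_sub _ conc_sub_le_tangent) |].
  apply Rmin_glb; [apply conc_sub_le_cap_pos | apply conc_sub_le_cap_neg].
Qed.

Lemma ghat_trunc_mid K x : - K <= x <= K -> ghat_trunc K x = ghat g Gam x.
Proof.
  intro Hx. unfold ghat_trunc, conc_trunc. rewrite tangent_clamp_mid by exact Hx.
  rewrite Rmin_left; [reflexivity |].
  apply Rmin_glb; [apply conc_sub_le_cap_pos | apply conc_sub_le_cap_neg].
Qed.

Lemma ghat_le_ghat_trunc K x : ghat g Gam x <= ghat_trunc K x.
Proof. pose proof (conc_sub_le_conc_trunc K x). unfold ghat_trunc, ghat. fold conc_sub. lra. Qed.

Lemma g_le_ghat_trunc K x : g x <= ghat_trunc K x.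
Proof.
  pose proof (conc_sub_le_conc_trunc K x). pose proof (sub_le_conc_sub x).
  unfold ghat_trunc. lra.
Qed.

Lemma ghat_trunc_le K x : ghat_trunc K x <= cap_height + C * Rabs x.
Proof.
  unfold ghat_trunc, conc_trunc.
  pose proof (Rmin_r (tangent_clamp conc_sub (right_slope conc_sub) K x)
    (Rmin (cap_pos x) (cap_neg x))).
  pose proof (Rmin_l (cap_pos x) (cap_neg x)). pose proof (Rmin_r (cap_pos x) (cap_neg x)).
  destruct (Rle_dec 0 x).
  - rewrite cap_pos_nonneg, Rabs_pos_eq in * by lra. lra.
  - rewrite cap_neg_nonpos, Rabs_left in * by lra. lra.
Qed.

Lemma ghat_trunc_abs_le (M K x : R) : (forall y, - M <= g y) ->
  Rabs (ghat_trunc K x) <= (Rabs M + Rabs cap_height + Rabs C) * (1 + Rabs x).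
Proof.
  intro HM.
  pose proof (g_le_ghat_trunc K x). pose proof (ghat_trunc_le K x). pose proof (HM x).
  pose proof (Rle_abs M). pose proof (Rle_abs cap_height).
  pose proof (Rabs_pos x). pose proof (Rabs_pos M).
  pose proof (Rabs_pos cap_height). pose proof (Rabs_pos C).
  assert (C * Rabs x <= Rabs C * Rabs x) by (apply Rmult_le_compat_r; [lra | apply Rle_abs]).
  assert (0 <= (Rabs M + Rabs cap_height) * Rabs x) by (apply Rmult_le_pos; lra).
  assert (0 <= Rabs C * Rabs x) by (apply Rmult_le_pos; lra).
  apply Rabs_le. split; lra.
Qed.

Lemma ghat_trunc_right K x : 0 < K -> trunc_radius K <= x -> ghat_trunc K x = cap_height + C * x.
Proof.
  intros HK Hx. destruct (trunc_radius_ge K) as (HKr & H0 & HR & _).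
  assert (Hax : Rabs x = x) by (apply Rabs_pos_eq; lra).
  pose proof (Gam_dominates_affine _ _ x ltac:(rewrite Hax; exact (Rle_trans _ _ _ H0 Hx))).
  pose proof (Gam_dominates_affine _ _ x ltac:(rewrite Hax; exact (Rle_trans _ _ _ HR Hx))).
  unfold ghat_trunc, conc_trunc.
  rewrite (tangent_clamp_right conc_sub) by lra. rewrite cap_pos_nonneg, cap_neg_nonneg by lra.
  rewrite (Rmin_left (cap_height + C * x - Gam x)) by lra. rewrite Rmin_right by lra. ring.
Qed.

Lemma ghat_trunc_left K x : 0 < K -> x <= - trunc_radius K -> ghat_trunc K x = cap_height - C * x.
Proof.
  intros HK Hx. destruct (trunc_radius_ge K) as (HKr & H0 & _ & HL).
  assert (Hax : Rabs x = - x) by (apply Rabs_left; lra).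
  replace (dominance_radius 0 (2 * C) (iota / 2)) with (dominance_radius 0 (- (2 * C)) (iota / 2))
    in H0 by (unfold dominance_radius; rewrite Rabs_Ropp; reflexivity).
  pose proof (Gam_dominates_affine _ _ x ltac:(rewrite Hax; apply (Rle_trans _ _ _ H0); lra)).
  pose proof (Gam_dominates_affine _ _ x ltac:(rewrite Hax; apply (Rle_trans _ _ _ HL); lra)).
  unfold ghat_trunc, conc_trunc.
  rewrite (tangent_clamp_left conc_sub) by lra. rewrite cap_pos_nonpos, cap_neg_nonpos by lra.
  rewrite (Rmin_right _ (cap_height - C * x - Gam x)) by lra. rewrite Rmin_right by lra. ring.
Qed.

Lemma ghat_trunc_lipschitz_right K : 0 <= K ->
  lipschitz_on (fun x => K <= x <= trunc_radius K) (ghat_trunc K).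
Proof.
  intro HK.
  pose proof (lipschitz_on_of_deriv_nondecreasing Gam dGam K (trunc_radius K)
    Gam_deriv dGam_nondecreasing) as HG.
  apply lipschitz_on_plus; [|exact HG].
  apply (lipschitz_on_ext _ _ (fun x => Rmin (conc_sub K + right_slope conc_sub K * (x - K))
    (Rmin (cap_height + C * x - Gam x) (cap_height - C * x - (Gam 0 + dGam 0 * x))))).
  { intros x Hx. unfold conc_trunc.
    rewrite (tangent_clamp_right conc_sub) by lra. rewrite cap_pos_nonneg, cap_neg_nonneg by lra.
    reflexivity. }
  apply lipschitz_on_min.
  { apply (lipschitz_on_affine _ _ (right_slope conc_sub K)); intros; ring. }
  apply lipschitz_on_min.
  - apply lipschitz_on_minus; [apply (lipschitz_on_affine _ _ C); intros; ring | exact HG].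
  - apply (lipschitz_on_affine _ _ (- C - dGam 0)); intros; ring.
Qed.

Lemma ghat_trunc_lipschitz_left K : 0 <= K ->
  lipschitz_on (fun x => - trunc_radius K <= x <= - K) (ghat_trunc K).
Proof.
  intro HK.
  pose proof (lipschitz_on_of_deriv_nondecreasing Gam dGam (- trunc_radius K) (- K)
    Gam_deriv dGam_nondecreasing) as HG.
  apply lipschitz_on_plus; [|exact HG].
  apply (lipschitz_on_ext _ _ (fun x => Rmin (conc_sub (- K) + right_slope conc_sub (- K) * (x + K))
    (Rmin (cap_height + C * x - (Gam 0 + dGam 0 * x)) (cap_height - C * x - Gam x)))).
  { intros x Hx. unfold conc_trunc.
    rewrite (tangent_clamp_left conc_sub) by lra. rewrite cap_pos_nonpos, cap_neg_nonpos by lra.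
    reflexivity. }
  apply lipschitz_on_min.
  { apply (lipschitz_on_affine _ _ (right_slope conc_sub (- K))); intros; ring. }
  apply lipschitz_on_min.
  - apply (lipschitz_on_affine _ _ (C - dGam 0)); intros; ring.
  - apply lipschitz_on_minus; [apply (lipschitz_on_affine _ _ (- C)); intros; ring | exact HG].
Qed.

Lemma ghat_trunc_unif_continuous K : 0 < K -> unif_continuous (ghat g Gam) ->
  unif_continuous (ghat_trunc K).
Proof.
  intros HK Huc. destruct (trunc_radius_ge K) as [HKr _].
  assert (Hmid : unif_continuous_on (fun x => - K <= x <= K) (ghat_trunc K)).
  { apply (unif_continuous_on_ext _ _ (ghat g Gam)); [apply ghat_trunc_mid |].
    intros eps Heps. destruct (Huc eps Heps) as [d [Hd H]]. exists d; auto. }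
  assert (Hright : unif_continuous_on (fun x => trunc_radius K <= x) (ghat_trunc K)).
  { apply unif_continuous_on_of_lipschitz_on.
    apply (lipschitz_on_ext _ _ (fun x => cap_height + C * x)).
    { intros x Hx. apply ghat_trunc_right; auto. }
    apply (lipschitz_on_affine _ _ C); intros; ring. }
  assert (Hleft : unif_continuous_on (fun x => x <= - trunc_radius K) (ghat_trunc K)).
  { apply unif_continuous_on_of_lipschitz_on.
    apply (lipschitz_on_ext _ _ (fun x => cap_height - C * x)).
    { intros x Hx. apply ghat_trunc_left; auto. }
    apply (lipschitz_on_affine _ _ (- C)); intros; ring. }
  pose proof (unif_continuous_on_of_lipschitz_on _ _
    (ghat_trunc_lipschitz_right K ltac:(lra))) as Hnear_r.
  pose proof (unif_continuous_on_of_lipschitz_on _ _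
    (ghat_trunc_lipschitz_left K ltac:(lra))) as Hnear_l.
  apply unif_continuous_of_on_True, (unif_continuous_on_glue _ _ K I).
  - apply (unif_continuous_on_glue _ _ (- K)); [split; [exact I | lra] | |].
    + apply (unif_continuous_on_glue _ _ (- trunc_radius K)); [repeat split; lra | |].
      * refine (unif_continuous_on_subset _ _ _ _ Hleft); intros x Hx; cbv beta in Hx; lra.
      * refine (unif_continuous_on_subset _ _ _ _ Hnear_l); intros x Hx; cbv beta in Hx; lra.
    + refine (unif_continuous_on_subset _ _ _ _ Hmid); intros x Hx; cbv beta in Hx; lra.
  - apply (unif_continuous_on_glue _ _ (trunc_radius K)); [split; [exact I | lra] | |].
    + refine (unif_continuous_on_subset _ _ _ _ Hnear_r); intros x Hx; cbv beta in Hx; lra.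
    + refine (unif_continuous_on_subset _ _ _ _ Hright); intros x Hx; cbv beta in Hx; lra.
Qed.

Lemma concave_ghat_trunc_sub K (G : R -> R) (a b : R) : 0 <= K ->
  (forall x, Gam x - G x = a + b * x) -> concave (fun x => ghat_trunc K x - G x).
Proof.
  intros HK HG. apply (concave_ext _ (fun x => conc_trunc K x + (a + b * x))).
  - intro x. unfold ghat_trunc. rewrite <- HG. ring.
  - apply concave_plus_affine, concave_conc_trunc, HK.
Qed.

End Truncation.

Theorem lemma2p1 (f gbar g Gam0 : R -> R) (iota : R)
  (Hf : C2b f) (Hinff : exists c, 0 < c /\ forall x, c <= f x)
  (Hgbar_cont : forall x, continuous gbar x) (Hgbar_bd : bounded_fun gbar)
  (Hiota : 0 < iota) (Hgbar_rng : forall x, iota <= gbar x <= / f x - iota)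
  (Hg_lsc : lower_semicontinuous g)
  (Hg_minus : exists M, forall x, - M <= g x)
  (Hg_plus : exists C, forall x, Rmax (g x) 0 <= C * (1 + Rabs x))
  (HGam0 : C2_with_second_deriv Gam0 gbar)
  (Hghat_uc : unif_continuous (ghat g Gam0)) :
  exists (gK : R -> R -> R) (xK : R -> R),
    (forall K, 0 < K ->
       unif_continuous (gK K) /\ K <= xK K /\
       (exists a b, forall x, xK K <= x -> gK K x = a * x + b) /\
       (exists a b, forall x, x <= - xK K -> gK K x = a * x + b) /\
       (forall x, - K <= x <= K -> gK K x = ghat g Gam0 x) /\
       (forall x, ghat g Gam0 x <= gK K x) /\
       (forall Gam, C2_with_second_deriv Gam gbar ->
          concave (fun x => gK K x - Gam x))) /\
    (exists C, forall K x, 0 < K -> Rabs (gK K x) <= C * (1 + Rabs x)) /\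
    (forall M eps, 0 < eps -> exists K0, 0 < K0 /\
       forall K x, K0 <= K -> Rabs x <= M -> Rabs (gK K x - ghat g Gam0 x) <= eps).
Proof.
  destruct Hg_minus as [M HM]. destruct Hg_plus as [C HC].
  pose proof HGam0 as [dGam HdGam].
  assert (HdG : forall x, is_derive Gam0 x (dGam x)) by (intro x; apply HdGam).
  assert (Hd2G : forall x, is_derive dGam x (gbar x)) by (intro x; apply HdGam).
  assert (Hgbar_ge : forall x, iota <= gbar x) by (intro x; apply Hgbar_rng).
  assert (Hg_le : forall x, g x <= C * (1 + Rabs x))
    by (intro x; eapply Rle_trans; [apply Rmax_l | apply HC]).
  exists (ghat_trunc g Gam0 dGam iota C), (trunc_radius g Gam0 dGam iota C).
  split; [|split].
  - intros K HK. repeat split.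
    + eapply ghat_trunc_unif_continuous; eauto.
    + apply trunc_radius_ge.
    + exists C, (cap_height iota C). intros x Hx.
      erewrite ghat_trunc_right; eauto. ring.
    + exists (- C), (cap_height iota C). intros x Hx.
      erewrite ghat_trunc_left; eauto. ring.
    + intros x Hx. eapply ghat_trunc_mid; eauto.
    + intro x. eapply ghat_le_ghat_trunc; eauto.
    + intros Gam HGam.
      destruct (C2_with_second_deriv_sub_affine Gam0 Gam gbar HGam0 HGam) as [a [b Hab]].
      eapply concave_ghat_trunc_sub; eauto; lra.
  - exists (Rabs M + Rabs (cap_height iota C) + Rabs C). intros K x HK.
    eapply ghat_trunc_abs_le; eauto.
  - intros Mx eps Heps. exists (Rmax 1 Mx).
    pose proof (Rmax_l 1 Mx). pose proof (Rmax_r 1 Mx). split; [lra|].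
    intros K x HK Hx.
    erewrite ghat_trunc_mid; eauto.
    + rewrite Rminus_diag, Rabs_R0. lra.
    + apply Rabs_le_between. lra.
Qed.
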